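(* Let $\overrightarrow{W}$ be a Morse sequence on a simplicial complex $K$. Then there exists an arranged Morse sequence $\overrightarrow{V}$ on $K$ such that $\overrightarrow{W}$ and $\overrightarrow{V}$ are equivalent.
   Context: A simplicial complex $K$ is a finite collection of non-empty finite sets closed under taking non-empty subsets; $\dim\sigma=|\sigma|-1$. A pair $(\sigma,\tau)$ with $\sigma\subsetneq\tau$ is a free pair for $K$ if $\tau$ is the only simplex other than $\sigma$ containing $\sigma$; $K$ is then an elementary expansion of $K\setminus\{\sigma,\tau\}$. If $\nu$ is a facet (maximal simplex) of $K$, $K$ is an elementary filling of $K\setminus\{\nu\}$. A Morse sequence on $K$ is a sequence $\langle\emptyset=K_0,\dots,K_k=K\rangle$ with each $K_i$ an elementary expansion or filling of $K_{i-1}$. For each $i$, set $\kappa_i=\nu$ if $K_i=K_{i-1}\cup\{\nu\}$ is a filling ($\nu$ is then critical), and $\kappa_i=(\sigma,\tau)$ if $K_i=K_{i-1}\cup\{\sigma,\tau\}$ is an expansion with $\sigma\subset\tau$ ($(\sigma,\tau)$ is then a regular pair). The dimension of a critical simplex is its dimension; the dimension of a regular pair $(\sigma,\tau)$ is $\dim\tau$. The Morse sequence is arranged if for each $i\in[1,k-1]$: $\dim(\kappa_i)\le\dim(\kappa_{i+1})$, and $\dim(\kappa_i)<\dim(\kappa_{i+1})$ whenever $\kappa_i$ is a critical simplex and $\kappa_{i+1}$ is a regular pair. Two Morse sequences on $K$ are equivalent if they have the same set of regular pairs (gradient vector field). *)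

From mathcomp Require Import all_boot.
Set Implicit Arguments. Unset Strict Implicit. Unset Printing Implicit Defensive.

Section Morse.
Variable T : finType.

Definition is_complex (K : {set {set T}}) : Prop :=
  set0 \notin K /\
  forall s t : {set T}, t \in K -> s != set0 -> s \subset t -> s \in K.

Definition sdim (s : {set T}) : nat := #|s|.-1.

Definition free_pair (K : {set {set T}}) (sigma tau : {set T}) : Prop :=
  [/\ sigma \in K, tau \in K, sigma \proper tau &
      forall rho, rho \in K -> sigma \subset rho -> rho = sigma \/ rho = tau].

Definition facet (K : {set {set T}}) (nu : {set T}) : Prop :=
  nu \in K /\ forall rho, rho \in K -> nu \subset rho -> rho = nu.

Inductive step := Crit of {set T} | Reg of {set T} & {set T}.

Definition step_simplices (k : step) : {set {set T}} :=
  match k with Crit nu => [set nu] | Reg s t => [set s; t] end.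

Definition step_dim (k : step) : nat :=
  match k with Crit nu => sdim nu | Reg _ t => sdim t end.

Definition is_crit (k : step) : bool := if k is Crit _ then true else false.
Definition is_reg (k : step) : bool := if k is Reg _ _ then true else false.

Definition cx (w : seq step) : {set {set T}} :=
  \bigcup_(k <- w) step_simplices k.

Definition valid_step (Kprev : {set {set T}}) (k : step) : Prop :=
  let Ki := Kprev :|: step_simplices k in
  is_complex Ki /\
  match k with
  | Crit nu => facet Ki nu /\ Ki :\ nu = Kprev
  | Reg s t => free_pair Ki s t /\ Ki :\: [set s; t] = Kprev
  end.

(* w encodes the Morse sequence <K_0 = empty, ..., K_k = K> *)
Definition morse_seq (K : {set {set T}}) (w : seq step) : Prop :=
  (forall i, i < size w -> valid_step (cx (take i w)) (nth (Crit set0) w i))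
  /\ cx w = K.

Definition arranged (w : seq step) : Prop :=
  forall i, i.+1 < size w ->
    let k1 := nth (Crit set0) w i in
    let k2 := nth (Crit set0) w i.+1 in
    step_dim k1 <= step_dim k2 /\
    (is_crit k1 -> is_reg k2 -> step_dim k1 < step_dim k2).

Definition reg_pairs (w : seq step) : seq ({set T} * {set T}) :=
  pmap (fun k => if k is Reg s t then Some (s, t) else None) w.

(* same gradient vector field *)
Definition equivalent (w v : seq step) : Prop := reg_pairs w =i reg_pairs v.

End Morse.

From HB Require Import structures.
From mathcomp Require Import all_boot zify.
Set Implicit Arguments. Unset Strict Implicit. Unset Printing Implicit Defensive.

(* Sort the steps of W by insertion along the key 2 dim k + [k is critical]; a
   key-sorted sequence is arranged, and reordering keeps the regular pairs.  It
   remains to see that consecutive steps k1, k2 with key k2 < key k1 can be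
   exchanged.  This is so whenever no simplex added by k1 is a face of one added
   by k2, and that follows by counting vertices: a step k only adds simplices
   with between dim k + [k is critical] and dim k + 1 vertices, the lower bound
   because a free pair (s, t) of a complex always has |t| = |s| + 1. *)

Section StepEq.
Variable T : finType.

Definition sum_of_step (k : step T) : {set T} + {set T} * {set T} :=
  match k with Crit nu => inl nu | Reg s t => inr (s, t) end.

Definition step_of_sum (x : {set T} + {set T} * {set T}) : step T :=
  match x with inl nu => Crit nu | inr (s, t) => Reg s t end.

Lemma sum_of_stepK : cancel sum_of_step step_of_sum. Proof. by case. Qed.

End StepEq.

HB.instance Definition _ (T : finType) :=
  Equality.copy (step T) (can_type (@sum_of_stepK T)).

Section Arranging.
Variable T : finType.
Implicit Types (A K : {set {set T}}) (s t : {set T}) (k : step T) (w : seq (step T)).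

Lemma card_free_pair K s t : is_complex K -> free_pair K s t -> #|t| = #|s|.+1.
Proof.
move=> [_ K_closed] [_ tK st free]; apply/eqP; rewrite eqn_leq proper_card // andbT.
rewrite leqNgt; apply/negP => big.
have [_ [v vt vNs]] := properP st.
have vsK : v |: s \in K.
  apply: K_closed tK _ _; first by apply/set0Pn; exists v; apply: setU11.
  by rewrite subUset sub1set vt proper_sub.
case: (free _ vsK (subsetUr _ _)) => e.
- by move: (setU11 v s); rewrite e (negbTE vNs).
- by move: big; rewrite -e cardsU1 vNs ltnn.
Qed.

Definition attaches A k : Prop :=
  [/\ is_complex (A :|: step_simplices k),
      {in step_simplices k, forall y, y \notin A},
      forall rho y, rho \in A :|: step_simplices k -> y \in step_simplices k ->
        y \subset rho -> rho \in step_simplices k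
    & if k is Reg s t then s \proper t else True].

Lemma valid_stepP A k : valid_step A k <-> attaches A k.
Proof.
case: k => [nu|s t] /=; split.
- move=> [K_cx [[_ nu_facet] E]]; split=> //.
  + by move=> y; rewrite in_set1 => /eqP ->; rewrite -E setD11.
  + by move=> rho y rhoK; rewrite in_set1 => /eqP -> /(nu_facet _ rhoK) ->; rewrite set11.
- move=> [K_cx fresh up _]; split=> //; split.
  + split; first by rewrite in_setU set11 orbT.
    by move=> rho rhoK /(up _ _ rhoK (set11 nu)); rewrite in_set1 => /eqP.
  + apply/setP => y; rewrite !inE; case: (y =P nu) => [->|_] /=; last by rewrite orbF.
    by rewrite (negbTE (fresh nu (set11 nu))).
- move=> [K_cx [[_ tK st free] E]]; split=> //.
  + by move=> y yst; rewrite -E in_setD yst.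
  + move=> rho y rhoK; rewrite in_set2 => /orP [] /eqP -> sub.
    * by case: (free rho rhoK sub) => ->; rewrite !inE eqxx ?orbT.
    * by case: (free rho rhoK (subset_trans (proper_sub st) sub)) => ->;
        rewrite !inE eqxx ?orbT.
- move=> [K_cx fresh up st]; split=> //; split.
  + split=> //; rewrite ?inE ?eqxx ?orbT //.
    move=> rho rhoK /(up _ _ rhoK (set21 s t)).
    by rewrite in_set2 => /orP [] /eqP ->; [left|right].
  + apply/setP => y; rewrite in_setD in_setU.
    by case yst: (y \in [set s; t]); rewrite ?orbF //= (negbTE (fresh y yst)).
Qed.

Lemma valid_step_card A k y : valid_step A k -> y \in step_simplices k ->
  step_dim k + is_crit k <= #|y| <= (step_dim k).+1.
Proof.
case: k => [nu|s t] [K_cx step_ok] /=.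
- rewrite in_set1 => /eqP ->; case: step_ok => [[nuK _] _].
  have : 0 < #|nu| by rewrite card_gt0; apply: contraNneq K_cx.1 => <-.
  by rewrite /sdim; lia.
- case: step_ok => [free _]; have := card_free_pair K_cx free.
  by rewrite in_set2 /sdim => ? /orP [] /eqP ->; lia.
Qed.

Definition key k : nat := (step_dim k).*2 + is_crit k.

Lemma valid_step_key_no_face A k1 k2 :
  valid_step A k1 -> valid_step (A :|: step_simplices k1) k2 -> key k2 < key k1 ->
  forall y x, y \in step_simplices k1 -> x \in step_simplices k2 -> ~~ (y \subset x).
Proof.
move=> ok1 ok2 lt_key y x y1 x2; apply/negP => yx.
have [_ fresh2 _ _] := (valid_stepP _ _).1 ok2.
have yx_proper : y \proper x.
  rewrite properEneq yx andbT; apply: contraTneq y1 => ->.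
  by move: (fresh2 x x2); rewrite in_setU negb_or => /andP [].
have := proper_card yx_proper.
have := valid_step_card ok1 y1; have := valid_step_card ok2 x2.
by move: lt_key; rewrite /key; lia.
Qed.

Lemma attaches_swap A k1 k2 :
  attaches A k1 -> attaches (A :|: step_simplices k1) k2 ->
  (forall y x, y \in step_simplices k1 -> x \in step_simplices k2 -> ~~ (y \subset x)) ->
  attaches A k2 /\ attaches (A :|: step_simplices k2) k1.
Proof.
move=> [cx1 fresh1 up1 wf1] [cx2 fresh2 up2 wf2] no_face.
set S1 := step_simplices k1 in cx1 fresh1 up1 cx2 fresh2 up2 no_face *.
set S2 := step_simplices k2 in cx2 fresh2 up2 no_face *.
have union_swap : A :|: S2 :|: S1 = A :|: S1 :|: S2 by rewrite -!setUA (setUC S2).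
have sub2 : A :|: S2 \subset A :|: S1 :|: S2 by rewrite setUSS // subsetUl.
have fresh2' y : y \in S2 -> (y \notin A) && (y \notin S1).
  by move/fresh2; rewrite in_setU negb_or.
split; split=> //.
- split; first by apply: contra (subsetP sub2 set0) cx2.1.
  move=> y x xK y0 yx; have := cx2.2 y x (subsetP sub2 _ xK) y0 yx.
  rewrite !in_setU => /orP [/orP [-> // | y1] | -> ]; last by rewrite orbT.
  case/setUP: xK => [xA | x2]; last by rewrite (negbTE (no_face y x y1 x2)) in yx.
  by have := fresh1 x (up1 x y (subsetP (subsetUl _ _) _ xA) y1 yx); rewrite xA.
- by move=> y /fresh2' /andP [].
- by move=> rho y /(subsetP sub2); apply: up2.
- by rewrite union_swap.
- move=> y y1; rewrite in_setU negb_or fresh1 //=.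
  by apply/negP => /fresh2'; rewrite y1 andbF.
- move=> rho y; rewrite union_swap => /setUP [rhoK | rho2] y1 yrho.
  + exact: up1 rho y rhoK y1 yrho.
  + by rewrite (negbTE (no_face _ _ y1 rho2)) in yrho.
Qed.

Lemma valid_step_swap A k1 k2 :
  valid_step A k1 -> valid_step (A :|: step_simplices k1) k2 -> key k2 < key k1 ->
  valid_step A k2 /\ valid_step (A :|: step_simplices k2) k1.
Proof.
move=> ok1 ok2 lt_key.
have [ok2' ok1'] := attaches_swap ((valid_stepP _ _).1 ok1) ((valid_stepP _ _).1 ok2)
  (valid_step_key_no_face ok1 ok2 lt_key).
by split; apply/valid_stepP.
Qed.

Fixpoint morse_from A w : Prop :=
  if w is k :: w' then valid_step A k /\ morse_from (A :|: step_simplices k) w'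
  else True.

Lemma morse_fromP A w : morse_from A w <->
  forall i, i < size w -> valid_step (A :|: cx (take i w)) (nth (Crit set0) w i).
Proof.
elim: w A => [|k w IH] A //=; rewrite /cx.
split=> [[ok_k ok_w] [|i] /= lt_i | ok_all].
- by rewrite big_nil setU0.
- by rewrite big_cons setUA; apply: (IH _).1.
- split; first by have := ok_all 0 isT; rewrite big_nil setU0.
  by apply/IH => i lt_i; have := ok_all i.+1 lt_i; rewrite /= big_cons setUA.
Qed.

Lemma morse_seqE K w : morse_seq K w <-> morse_from set0 w /\ cx w = K.
Proof.
rewrite /morse_seq; split=> [[ok_w <-] | [/morse_fromP ok_w <-]]; split=> //.
- by apply/morse_fromP => i; rewrite set0U; apply: ok_w.
- by move=> i; rewrite -[cx _]set0U; apply: ok_w.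
Qed.

Lemma morse_from_insert A k w :
  valid_step A k -> morse_from (A :|: step_simplices k) w -> sorted leq (map key w) ->
  exists v, [/\ morse_from A v, sorted leq (map key v) & perm_eq (k :: w) v].
Proof.
elim: w A => [|x w IH] A ok_k ok_w sorted_w; first by exists [:: k].
have [le_kx | lt_xk] := leqP (key k) (key x).
  by exists [:: k, x & w]; split; rewrite //= le_kx.
case: ok_w => ok_x ok_w.
have [ok_x' ok_k'] := valid_step_swap ok_k ok_x lt_xk.
have ok_w' : morse_from (A :|: step_simplices x :|: step_simplices k) w.
  by rewrite -setUA (setUC (step_simplices x)) setUA.
have [v [ok_v sorted_v perm_v]] := IH _ ok_k' ok_w' (path_sorted sorted_w).
exists (x :: v); split=> //=.
- rewrite (path_sortedE leq_trans) sorted_v andbT all_map.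
  rewrite -(perm_all _ perm_v) /= (ltnW lt_xk) -all_map.
  by move: sorted_w; rewrite /= (path_sortedE leq_trans) => /andP [].
- by rewrite -(perm_cons x) in perm_v; rewrite (perm_catCA [:: k] [:: x] w).
Qed.

Lemma morse_from_sort A w :
  morse_from A w -> exists v, [/\ morse_from A v, sorted leq (map key v) & perm_eq w v].
Proof.
elim: w A => [|k w IH] A /=; first by exists [::].
move=> [ok_k /IH [v [ok_v sorted_v perm_v]]].
have [v' [ok_v' sorted_v' perm_v']] := morse_from_insert ok_k ok_v sorted_v.
by exists v'; split=> //; apply: perm_trans perm_v'; rewrite perm_cons.
Qed.

Lemma sorted_key_arranged w : sorted leq (map key w) -> arranged w.
Proof.
rewrite sorted_map; case: w => [|k w] //= /(pathP (Crit set0)) sorted_w i lt_i.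
move: (sorted_w i lt_i); rewrite /= /key.
by case: (nth _ (k :: w) i) => [?|? ?]; case: (nth _ w i) => [?|? ?] /=; split=> //; lia.
Qed.

End Arranging.

Theorem theorem5 (T : finType) (K : {set {set T}}) (W : seq (step T)) :
  is_complex K -> morse_seq K W ->
  exists V : seq (step T), [/\ morse_seq K V, arranged V & equivalent W V].
Proof.
move=> _ /morse_seqE [ok_W <-].
have [V [ok_V sorted_V perm_WV]] := morse_from_sort ok_W.
exists V; split.
- by apply/morse_seqE; split=> //; apply/esym/perm_big.
- exact: sorted_key_arranged.
- by move=> p; rewrite /reg_pairs !mem_pmap; apply/perm_mem/perm_map.
Qed.
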